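(* There is a sentence $\alpha$ of ESG such that $\models_{\mathrm{ESG}}\alpha$ but not $\models_{\text{t-ESG}}\alpha$. In other words, validity in ESG of an ESG sentence does not imply its validity in t-ESG.
   Context: The logic t-ESG. Sorts object, action, clock, time; standard names $\mathcal N_O,\mathcal N_A,\mathcal N_C$ (countably infinite) and time names $\mathbb Q_{\ge0}$; variables of sorts object, action, clock; fluent and rigid function and predicate symbols (action- and clock-valued functions rigid); distinguished fluent predicates $\mathit{Poss}$, $\mathit{reset}$, $g$. Primitive terms/formulas: symbols applied to standard names. Situation formulas: $P(\vec t)$, $t_1=t_2$, $c\bowtie r$ ($c$ clock term), $r\bowtie r'$ ($r,r'\in\mathbb Q_{\ge0}$), closed under $\wedge,\neg,\forall$, $\square\alpha$, $[\delta]\alpha$, $[\![\delta]\!]\phi$, $[\![\delta]\!]^{<\infty}\phi$; trace formulas closed under $\wedge,\neg,\forall$, $\phi\,\mathcal U_I\,\psi$. Programs $\delta::=t\mid\alpha?\mid\delta_1;\delta_2\mid\delta_1|\delta_2\mid\delta_1\|\delta_2\mid\delta^*$ ($t$ action term, $\alpha$ static). Timed traces $t_1p_1t_2p_2\cdots$ with non-decreasing $t_i\in\mathbb R_{\ge0}$, $p_i\in\mathcal N_A$; $(p_1,t_1)\cdots(p_k,t_k)$ denotes $t_1p_1\cdots t_kp_k$; $\mathrm{time}(z)$ = time of last action ($0$ for $\langle\rangle$). A t-ESG world maps (primitive term, finite trace) to a name of the right sort, (primitive formula, finite trace) to $\{0,1\}$, (clock name, finite trace) to $\mathbb R_{\ge0}$,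 with rigidity, unique names for actions and clocks, $w[c,\langle\rangle]=0$, $w[c,z\cdot t]=w[c,z]+t-\mathrm{time}(z)$, $w[c,z\cdot p]=0$ if $w[\mathit{reset}(c),z\cdot p]=1$ else $w[c,z]$. Transitions given $w$: a time step $\langle z,\delta\rangle\to\langle z\cdot t,\delta\rangle$ ($t\ge\mathrm{time}(z)$ any real) followed by an action step, where $\langle z,a\rangle\to_s\langle z\cdot|a|^z_w,\top?\rangle$ and steps propagate through $;$ (into $\delta_2$ once $\delta_1$ final), $|$, $\|$, $^*$ in the standard way; final configurations: $\alpha?$ if $\alpha$ holds, $;$,$\|$ if both parts final, $|$ if one is, $\delta^*$ always. $\|\delta\|^z_w$: finite $z'$ reaching a final configuration, and infinite traces never visiting one. Truth: $w,z\models F(\vec t)$ iff $w[F(\vec n),z]=1$ ($\vec n$ the denotations); equality; $c\bowtie r$ iff $w[c,z]\bowtie r$; usual connectives and substitutional quantifiers; $\square\alpha$: after all finite extensions; $w,z\models[\delta]\alpha$ iff $w,zz'\models\alpha$ for all finite $z'\in\|\delta\|^z_w$; $[\![\delta]\!]\phi$ iff $w,z,\tau\models\phi$ for all $\tau\in\|\delta\|^z_w$; until: $\tau=z_1\tau'$, $z_1$ nonempty, $\psi$ at $(zz_1,\tau')$, $\mathrm{time}(z_1)\in\mathrm{time}(z)+I$, $\phi$ at all intermediate splits. $\models_{\text{t-ESG}}\alpha$: $w,\langle\rangle\models\alpha$ for every t-ESG world. The logic ESG. Language: t-ESG formulas mentioning only object and action terms (no clock terms, no $g$, no $\mathit{reset}$)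 and using only unbounded until. ESG traces are sequences of action names; an ESG world maps (primitive object/action term, finite ESG trace) to names and (primitive formula, finite ESG trace) to $\{0,1\}$, with rigidity and unique names for actions; transitions are the action steps only (no time steps); final configurations, program traces and truth are defined analogously without clocks. $\models_{\mathrm{ESG}}\alpha$: $w,\langle\rangle\models\alpha$ for all ESG worlds. *)

From Stdlib Require Import Reals List QArith Qreals Bool Relations.
Import ListNotations.
Set Implicit Arguments.

(* Sorts of terms (time names are handled separately as rationals). *)
Inductive sort := SObj | SAct | SClk.

Definition sort_eqb (s s' : sort) : bool :=
  match s, s' with
  | SObj, SObj | SAct, SAct | SClk, SClk => true
  | _, _ => false
  end.

(* Function symbols: result sort, argument sorts, rigid/fluent flag, index.
   Standard names of every sort are represented by natural numbers. *)
Record fsym := FSym { f_sort : sort; f_args : list sort; f_rigid : bool; f_id : nat }.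

Inductive psym :=
| PPoss
| PReset
| PG (ar : list sort)
| PUser (ar : list sort) (rigid : bool) (id : nat).

Definition p_args (P : psym) : list sort :=
  match P with
  | PPoss => [SAct]
  | PReset => [SClk]
  | PG ar => ar
  | PUser ar _ _ => ar
  end.

Definition p_rigid (P : psym) : bool :=
  match P with PUser _ r _ => r | _ => false end.

Inductive term :=
| TVar (s : sort) (x : nat)
| TName (s : sort) (n : nat)
| TApp (f : fsym) (args : list term).

Definition sort_of (t : term) : sort :=
  match t with TVar s _ => s | TName s _ => s | TApp f _ => f_sort f end.

Inductive cmp := CLt | CLe | CEq | CGe | CGt.

Definition rcmp (c : cmp) (x y : R) : Prop :=
  match c with
  | CLt => (x < y)%R | CLe => (x <= y)%R | CEq => x = y
  | CGe => (x >= y)%R | CGt => (x > y)%R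
  end.

Record interval := Intv { i_lo : Q; i_lo_closed : bool; i_hi : option Q; i_hi_closed : bool }.

Definition I_unbounded : interval := Intv 0%Q true None false.

Inductive form :=
| FPred (P : psym) (args : list term)
| FEq (t1 t2 : term)
| FClk (c : term) (op : cmp) (r : Q)
| FRat (r1 : Q) (op : cmp) (r2 : Q)
| FAnd (a b : form)
| FNot (a : form)
| FAll (s : sort) (x : nat) (a : form)
| FBox (a : form)
| FAfter (d : prog) (a : form)
| FEvery (d : prog) (p : tform)
| FEveryFin (d : prog) (p : tform)
with tform :=
| TSit (a : form)
| TAndT (p q : tform)
| TNotT (p : tform)
| TAllT (s : sort) (x : nat) (p : tform)
| TUntil (I : interval) (p q : tform)
with prog :=
| PAct (t : term)
| PTest (a : form)
| PSeq (d1 d2 : prog)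
| PChoice (d1 d2 : prog)
| PConc (d1 d2 : prog)
| PStar (d : prog).

Definition FTrue : form := FEq (TName SObj 0) (TName SObj 0).

Fixpoint wf_term (t : term) : Prop :=
  match t with
  | TVar _ _ | TName _ _ => True
  | TApp f args =>
      map sort_of args = f_args f /\
      (fix go (l : list term) : Prop :=
         match l with [] => True | u :: l' => wf_term u /\ go l' end) args
  end.

Definition wf_terms (l : list term) : Prop := Forall wf_term l.

Definition wf_interval (I : interval) : Prop :=
  (0 <= i_lo I)%Q /\
  match i_hi I with None => True | Some h => (i_lo I <= h)%Q end.

Fixpoint static (a : form) : Prop :=
  match a with
  | FAnd a b => static a /\ static b
  | FNot a => static a
  | FAll _ _ a => static a
  | FBox _ | FAfter _ _ | FEvery _ _ | FEveryFin _ _ => False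
  | _ => True
  end.

Fixpoint wf_form (a : form) : Prop :=
  match a with
  | FPred P args => wf_terms args /\ map sort_of args = p_args P
  | FEq t1 t2 => wf_term t1 /\ wf_term t2 /\ sort_of t1 = sort_of t2
  | FClk c _ r => wf_term c /\ sort_of c = SClk /\ (0 <= r)%Q
  | FRat r1 _ r2 => (0 <= r1)%Q /\ (0 <= r2)%Q
  | FAnd a b => wf_form a /\ wf_form b
  | FNot a => wf_form a
  | FAll _ _ a => wf_form a
  | FBox a => wf_form a
  | FAfter d a => wf_prog d /\ wf_form a
  | FEvery d p | FEveryFin d p => wf_prog d /\ wf_tform p
  end
with wf_tform (p : tform) : Prop :=
  match p with
  | TSit a => wf_form a
  | TAndT p q => wf_tform p /\ wf_tform q
  | TNotT p => wf_tform p
  | TAllT _ _ p => wf_tform p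
  | TUntil J p q => wf_interval J /\ wf_tform p /\ wf_tform q
  end
with wf_prog (d : prog) : Prop :=
  match d with
  | PAct t => wf_term t /\ sort_of t = SAct
  | PTest a => static a /\ wf_form a
  | PSeq d1 d2 | PChoice d1 d2 | PConc d1 d2 => wf_prog d1 /\ wf_prog d2
  | PStar d => wf_prog d
  end.

Fixpoint closed_term (bnd : list (sort * nat)) (t : term) : Prop :=
  match t with
  | TVar s x => In (s, x) bnd
  | TName _ _ => True
  | TApp _ args =>
      (fix go (l : list term) : Prop :=
         match l with [] => True | u :: l' => closed_term bnd u /\ go l' end) args
  end.

Fixpoint closed_form (bnd : list (sort * nat)) (a : form) : Prop :=
  match a with
  | FPred _ args => Forall (closed_term bnd) args
  | FEq t1 t2 => closed_term bnd t1 /\ closed_term bnd t2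
  | FClk c _ _ => closed_term bnd c
  | FRat _ _ _ => True
  | FAnd a b => closed_form bnd a /\ closed_form bnd b
  | FNot a => closed_form bnd a
  | FAll s x a => closed_form ((s, x) :: bnd) a
  | FBox a => closed_form bnd a
  | FAfter d a => closed_prog bnd d /\ closed_form bnd a
  | FEvery d p | FEveryFin d p => closed_prog bnd d /\ closed_tform bnd p
  end
with closed_tform (bnd : list (sort * nat)) (p : tform) : Prop :=
  match p with
  | TSit a => closed_form bnd a
  | TAndT p q => closed_tform bnd p /\ closed_tform bnd q
  | TNotT p => closed_tform bnd p
  | TAllT s x p => closed_tform ((s, x) :: bnd) p
  | TUntil _ p q => closed_tform bnd p /\ closed_tform bnd q
  end
with closed_prog (bnd : list (sort * nat)) (d : prog) : Prop :=
  match d with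
  | PAct t => closed_term bnd t
  | PTest a => closed_form bnd a
  | PSeq d1 d2 | PChoice d1 d2 | PConc d1 d2 => closed_prog bnd d1 /\ closed_prog bnd d2
  | PStar d => closed_prog bnd d
  end.

Definition sentence (a : form) : Prop := wf_form a /\ closed_form [] a.

Fixpoint esg_term (t : term) : Prop :=
  sort_of t <> SClk /\
  match t with
  | TApp _ args =>
      (fix go (l : list term) : Prop :=
         match l with [] => True | u :: l' => esg_term u /\ go l' end) args
  | _ => True
  end.

Definition esg_psym (P : psym) : Prop :=
  match P with PReset | PG _ => False | _ => True end.

Definition unbounded (I : interval) : Prop :=
  (i_lo I == 0)%Q /\ i_lo_closed I = true /\ i_hi I = None.

Fixpoint esg_form (a : form) : Prop :=
  match a with
  | FPred P args => esg_psym P /\ Forall esg_term args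
  | FEq t1 t2 => esg_term t1 /\ esg_term t2
  | FClk _ _ _ | FRat _ _ _ => False
  | FAnd a b => esg_form a /\ esg_form b
  | FNot a => esg_form a
  | FAll s _ a => s <> SClk /\ esg_form a
  | FBox a => esg_form a
  | FAfter d a => esg_prog d /\ esg_form a
  | FEvery d p | FEveryFin d p => esg_prog d /\ esg_tform p
  end
with esg_tform (p : tform) : Prop :=
  match p with
  | TSit a => esg_form a
  | TAndT p q => esg_tform p /\ esg_tform q
  | TNotT p => esg_tform p
  | TAllT s _ p => s <> SClk /\ esg_tform p
  | TUntil J p q => unbounded J /\ esg_tform p /\ esg_tform q
  end
with esg_prog (d : prog) : Prop :=
  match d with
  | PAct t => esg_term t
  | PTest a => esg_form a
  | PSeq d1 d2 | PChoice d1 d2 | PConc d1 d2 => esg_prog d1 /\ esg_prog d2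
  | PStar d => esg_prog d
  end.

Inductive ptrace (E : Type) := PFin (l : list E) | PInf (f : nat -> E).
Arguments PFin {E}. Arguments PInf {E}.

Definition prefix {E} (f : nat -> E) (k : nat) : list E := map f (seq 0 k).

Definition ptake {E} (k : nat) (tau : ptrace E) : list E :=
  match tau with PFin l => firstn k l | PInf f => prefix f k end.

Definition pdrop {E} (k : nat) (tau : ptrace E) : ptrace E :=
  match tau with PFin l => PFin (skipn k l) | PInf f => PInf (fun n => f (k + n)%nat) end.

Definition plen_ok {E} (k : nat) (tau : ptrace E) : Prop :=
  match tau with PFin l => (k <= length l)%nat | PInf _ => True end.

Inductive tev := ETime (t : R) | EAct (p : nat).

Definition ttime (z : list tev) : R :=
  fold_left (fun acc e => match e with ETime t => t | EAct _ => acc end) z 0%R.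

(* finite prefixes of timed traces t1 p1 t2 p2 ... with 0 <= t1 <= t2 <= ... *)
Fixpoint tvalid_from (expect_time : bool) (last : R) (z : list tev) : Prop :=
  match z with
  | [] => True
  | ETime t :: z' => expect_time = true /\ (last <= t)%R /\ tvalid_from false t z'
  | EAct _ :: z' => expect_time = false /\ tvalid_from true last z'
  end.

Definition tvalid (z : list tev) : Prop := tvalid_from true 0%R z.

Definition in_interval (I : interval) (base d : R) : Prop :=
  (if i_lo_closed I then (base + Q2R (i_lo I) <= d)%R else (base + Q2R (i_lo I) < d)%R) /\
  match i_hi I with
  | None => True
  | Some h => if i_hi_closed I then (d <= base + Q2R h)%R else (d < base + Q2R h)%R
  end.

Record model (E : Type) := Model {
  m_fun : fsym -> list nat -> list E -> nat;
  m_pred : psym -> list nat -> list E -> bool;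
  m_timed : bool;
  m_clock : nat -> list E -> R;
  m_act : nat -> E;
  m_tstep : list E -> list E -> Prop;
  m_trace : list E -> Prop;
  m_until_ok : interval -> list E -> list E -> Prop
}.

Definition env := sort -> nat -> nat.

Definition upd (e : env) (s : sort) (x n : nat) : env :=
  fun s' x' => if sort_eqb s s' && Nat.eqb x x' then n else e s' x'.

Section Semantics.
Context {E : Type} (M : model E).

Fixpoint ev (e : env) (z : list E) (t : term) : nat :=
  match t with
  | TVar s x => e s x
  | TName _ n => n
  | TApp f args => m_fun M f (map (ev e z) args) z
  end.

Fixpoint holds_st (e : env) (z : list E) (a : form) : Prop :=
  match a with
  | FPred P args => m_pred M P (map (ev e z) args) z = true
  | FEq t1 t2 => sort_of t1 = sort_of t2 /\ ev e z t1 = ev e z t2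
  | FClk c op r => m_timed M = true /\ rcmp op (m_clock M (ev e z c) z) (Q2R r)
  | FRat r1 op r2 => m_timed M = true /\ rcmp op (Q2R r1) (Q2R r2)
  | FAnd a b => holds_st e z a /\ holds_st e z b
  | FNot a => ~ holds_st e z a
  | FAll s x a => forall n, holds_st (upd e s x n) z a
  | _ => False
  end.

Fixpoint final (e : env) (z : list E) (d : prog) : Prop :=
  match d with
  | PAct _ => False
  | PTest a => holds_st e z a
  | PSeq d1 d2 => final e z d1 /\ final e z d2
  | PChoice d1 d2 => final e z d1 \/ final e z d2
  | PConc d1 d2 => final e z d1 /\ final e z d2
  | PStar _ => True
  end.

Inductive astep (e : env) : list E -> prog -> list E -> prog -> Prop :=
| as_act z t : astep e z (PAct t) (z ++ [m_act M (ev e z t)]) (PTest FTrue)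
| as_seq1 z d1 d2 z' g : astep e z d1 z' g -> astep e z (PSeq d1 d2) z' (PSeq g d2)
| as_seq2 z d1 d2 z' g : final e z d1 -> astep e z d2 z' g -> astep e z (PSeq d1 d2) z' g
| as_choice1 z d1 d2 z' g : astep e z d1 z' g -> astep e z (PChoice d1 d2) z' g
| as_choice2 z d1 d2 z' g : astep e z d2 z' g -> astep e z (PChoice d1 d2) z' g
| as_conc1 z d1 d2 z' g : astep e z d1 z' g -> astep e z (PConc d1 d2) z' (PConc g d2)
| as_conc2 z d1 d2 z' g : astep e z d2 z' g -> astep e z (PConc d1 d2) z' (PConc d1 g)
| as_star z d z' g : astep e z d z' g -> astep e z (PStar d) z' (PSeq g (PStar d)).

(* a transition: a time step (trivial in ESG) followed by an action step *)
Definition step (e : env) (c c' : list E * prog) : Prop :=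
  exists z0, m_tstep M (fst c) z0 /\ astep e z0 (snd c) (fst c') (snd c').

Definition fin_ptrace (e : env) (z : list E) (d : prog) (z' : list E) : Prop :=
  exists d', clos_refl_trans _ (step e) (z, d) (z ++ z', d') /\ final e (z ++ z') d'.

Definition inf_ptrace (e : env) (z : list E) (d : prog) (tau : nat -> E) : Prop :=
  exists c : nat -> list E * prog,
    c 0%nat = (z, d) /\
    (forall i, step e (c i) (c (S i))) /\
    (forall i, ~ final e (fst (c i)) (snd (c i))) /\
    (forall i, exists k, fst (c i) = z ++ prefix tau k).

Definition in_ptraces (e : env) (z : list E) (d : prog) (tau : ptrace E) : Prop :=
  match tau with
  | PFin z' => fin_ptrace e z d z'
  | PInf f => inf_ptrace e z d f
  end.

Fixpoint holds (e : env) (z : list E) (a : form) : Prop :=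
  match a with
  | FPred P args => m_pred M P (map (ev e z) args) z = true
  | FEq t1 t2 => sort_of t1 = sort_of t2 /\ ev e z t1 = ev e z t2
  | FClk c op r => m_timed M = true /\ rcmp op (m_clock M (ev e z c) z) (Q2R r)
  | FRat r1 op r2 => m_timed M = true /\ rcmp op (Q2R r1) (Q2R r2)
  | FAnd a b => holds e z a /\ holds e z b
  | FNot a => ~ holds e z a
  | FAll s x a => forall n, holds (upd e s x n) z a
  | FBox a => forall z', m_trace M (z ++ z') -> holds e (z ++ z') a
  | FAfter d a => forall z', fin_ptrace e z d z' -> holds e (z ++ z') a
  | FEvery d p => forall tau, in_ptraces e z d tau -> holdsT e z tau p
  | FEveryFin d p => forall z', fin_ptrace e z d z' -> holdsT e z (PFin z') p
  end
with holdsT (e : env) (z : list E) (tau : ptrace E) (p : tform) : Prop :=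
  match p with
  | TSit a => holds e z a
  | TAndT p q => holdsT e z tau p /\ holdsT e z tau q
  | TNotT p => ~ holdsT e z tau p
  | TAllT s x p => forall n, holdsT (upd e s x n) z tau p
  | TUntil J p q =>
      exists k, (1 <= k)%nat /\ plen_ok k tau /\
        m_until_ok M J z (ptake k tau) /\
        holdsT e (z ++ ptake k tau) (pdrop k tau) q /\
        (forall j, (j < k)%nat -> holdsT e (z ++ ptake j tau) (pdrop j tau) p)
  end.

End Semantics.

Record esg_world := EsgWorld {
  ew_fun : fsym -> list nat -> list nat -> nat;
  ew_pred : psym -> list nat -> list nat -> bool;
  ew_rigid_fun : forall f a z z',
      (f_rigid f = true \/ f_sort f = SAct) -> ew_fun f a z = ew_fun f a z';
  ew_rigid_pred : forall P a z z', p_rigid P = true -> ew_pred P a z = ew_pred P a z';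
  (* unique names for actions (on primitive action terms of ESG) *)
  ew_una : forall f f' a a' z,
      f_sort f = SAct -> f_sort f' = SAct ->
      ~ In SClk (f_args f) -> ~ In SClk (f_args f') ->
      length a = length (f_args f) -> length a' = length (f_args f') ->
      ew_fun f a z = ew_fun f' a' z -> f = f' /\ a = a'
}.

Definition esg_model (w : esg_world) : model nat :=
  {| m_fun := ew_fun w; m_pred := ew_pred w;
     m_timed := false; m_clock := fun _ _ => 0%R;
     m_act := fun p => p;
     m_tstep := fun z z0 => z0 = z;
     m_trace := fun _ => True;
     m_until_ok := fun _ _ _ => True |}.

Definition esg_valid (a : form) : Prop :=
  forall (w : esg_world) (e : env), holds (esg_model w) e [] a.

Record tesg_world := TesgWorld {
  tw_fun : fsym -> list nat -> list tev -> nat;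
  tw_pred : psym -> list nat -> list tev -> bool;
  tw_clk : nat -> list tev -> R;
  tw_rigid_fun : forall f a z z',
      (f_rigid f = true \/ f_sort f = SAct \/ f_sort f = SClk) ->
      tw_fun f a z = tw_fun f a z';
  tw_rigid_pred : forall P a z z', p_rigid P = true -> tw_pred P a z = tw_pred P a z';
  tw_una_act : forall f f' a a' z,
      f_sort f = SAct -> f_sort f' = SAct ->
      length a = length (f_args f) -> length a' = length (f_args f') ->
      tw_fun f a z = tw_fun f' a' z -> f = f' /\ a = a';
  tw_una_clk : forall f f' a a' z,
      f_sort f = SClk -> f_sort f' = SClk ->
      length a = length (f_args f) -> length a' = length (f_args f') ->
      tw_fun f a z = tw_fun f' a' z -> f = f' /\ a = a';
  tw_clk_nonneg : forall c z, tvalid z -> (0 <= tw_clk c z)%R;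
  tw_clk_nil : forall c, tw_clk c [] = 0%R;
  tw_clk_time : forall c z t, tw_clk c (z ++ [ETime t]) = (tw_clk c z + t - ttime z)%R;
  tw_clk_act : forall c z p,
      tw_clk c (z ++ [EAct p]) =
      (if tw_pred PReset [c] (z ++ [EAct p]) then 0%R else tw_clk c z)
}.

Definition tesg_model (w : tesg_world) : model tev :=
  {| m_fun := tw_fun w; m_pred := tw_pred w;
     m_timed := true; m_clock := tw_clk w;
     m_act := EAct;
     m_tstep := fun z z0 => exists t, (ttime z <= t)%R /\ z0 = z ++ [ETime t];
     m_trace := tvalid;
     m_until_ok := fun I z z1 => in_interval I (ttime z) (ttime (z ++ z1)) |}.

Definition tesg_valid (a : form) : Prop :=
  forall (w : tesg_world) (e : env), holds (tesg_model w) e [] a.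

From Stdlib Require Import Reals List Relations Lra Classical_Prop.
From Stdlib Require Cantor.
Import ListNotations.

(* In ESG an action term has exactly one execution, so after it every formula
   either holds or fails: [a]φ ∨ [a]¬φ is ESG-valid.  In t-ESG the action can be
   executed at any time point; a fluent that is true exactly at time 0 holds after
   executing a at time 0 and fails after executing it at time 1. *)

Lemma map_inj {A B : Type} (f : A -> B) :
  (forall x y, f x = f y -> x = y) -> forall l l', map f l = map f l' -> l = l'.
Proof.
  intros Hf l; induction l as [|x l IH]; intros [|y l'] H; try discriminate; auto.
  injection H as Hxy Hl; f_equal; auto.
Qed.

Definition pair_code (x y : nat) : nat := Cantor.to_nat (x, y).

Lemma pair_code_inj x y x' y' : pair_code x y = pair_code x' y' -> x = x' /\ y = y'.
Proof.
  unfold pair_code; intro H; apply (f_equal Cantor.of_nat) in H.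
  rewrite !Cantor.cancel_of_to in H; injection H; auto.
Qed.

Fixpoint list_code (l : list nat) : nat :=
  match l with [] => 0 | x :: l' => S (pair_code x (list_code l')) end.

Lemma list_code_inj l l' : list_code l = list_code l' -> l = l'.
Proof.
  revert l'; induction l as [|x l IH]; intros [|y l'] H; try discriminate; auto.
  injection H as H; apply pair_code_inj in H as [-> H]; f_equal; auto.
Qed.

Definition sort_code (s : sort) : nat := match s with SObj => 0 | SAct => 1 | SClk => 2 end.

Lemma sort_code_inj s s' : sort_code s = sort_code s' -> s = s'.
Proof. destruct s, s'; simpl; congruence. Qed.

Definition fsym_code (f : fsym) : nat :=
  list_code [sort_code (f_sort f); list_code (map sort_code (f_args f));
             Nat.b2n (f_rigid f); f_id f].

Lemma fsym_code_inj f f' : fsym_code f = fsym_code f' -> f = f'.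
Proof.
  destruct f as [s args r i], f' as [s' args' r' i']; unfold fsym_code.
  intro H; apply list_code_inj in H; injection H as Hs Hargs Hr ->.
  apply sort_code_inj in Hs; apply list_code_inj, (map_inj _ sort_code_inj) in Hargs.
  destruct r, r'; try discriminate; subst; reflexivity.
Qed.

(* Unique names for actions and clocks force an injective, rigid interpretation
   of function symbols. *)
Definition code_fun (f : fsym) (a : list nat) (_ : list tev) : nat :=
  pair_code (fsym_code f) (list_code a).

Lemma code_fun_inj f f' a a' z z' : code_fun f a z = code_fun f' a' z' -> f = f' /\ a = a'.
Proof.
  unfold code_fun; intro H; apply pair_code_inj in H as [Hf Ha].
  split; [apply fsym_code_inj | apply list_code_inj]; assumption.
Qed.

Lemma ttime_snoc_time z t : ttime (z ++ [ETime t]) = (ttime z + t - ttime z)%R.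
Proof. unfold ttime at 1; rewrite fold_left_app; simpl; ring. Qed.

Lemma ttime_snoc_act z p : ttime (z ++ [EAct p]) = ttime z.
Proof. unfold ttime; rewrite fold_left_app; reflexivity. Qed.

Lemma ttime_from_nonneg z : forall b last acc,
  tvalid_from b last z -> (0 <= last)%R -> (0 <= acc)%R ->
  (0 <= fold_left (fun acc e => match e with ETime t => t | EAct _ => acc end) z acc)%R.
Proof.
  induction z as [|[t|p] z IH]; intros b last acc Hz Hlast Hacc; simpl in *; auto.
  - destruct Hz as [_ [Hle Hz]]; apply (IH false t); [exact Hz | lra | lra].
  - destruct Hz as [_ Hz]; exact (IH true last acc Hz Hlast Hacc).
Qed.

Lemma ttime_nonneg z : tvalid z -> (0 <= ttime z)%R.
Proof. intro Hz; eapply ttime_from_nonneg; [exact Hz | lra | lra]. Qed.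

Definition at_time_zero (z : list tev) : bool := if Req_EM_T (ttime z) 0 then true else false.

Lemma at_time_zero_iff z : at_time_zero z = true <-> ttime z = 0%R.
Proof. unfold at_time_zero; destruct (Req_EM_T (ttime z) 0); split; congruence. Qed.

(* Fluent user predicates hold exactly at time 0; every other predicate, in
   particular reset, is constantly false, so clocks just measure the time. *)
Definition time_zero_pred (P : psym) (_ : list nat) (z : list tev) : bool :=
  match P with PUser _ false _ => at_time_zero z | _ => false end.

Lemma time_zero_pred_rigid P a z z' :
  p_rigid P = true -> time_zero_pred P a z = time_zero_pred P a z'.
Proof. destruct P as [| | |ar [|] i]; simpl; congruence. Qed.

Definition time_world : tesg_world :=
  {| tw_fun := code_fun;
     tw_pred := time_zero_pred;
     tw_clk := fun _ => ttime;
     tw_rigid_fun := fun _ _ _ _ _ => eq_refl;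
     tw_rigid_pred := time_zero_pred_rigid;
     tw_una_act := fun f f' a a' z _ _ _ _ => code_fun_inj f f' a a' z z;
     tw_una_clk := fun f f' a a' z _ _ _ _ => code_fun_inj f f' a a' z z;
     tw_clk_nonneg := fun _ => ttime_nonneg;
     tw_clk_nil := fun _ => eq_refl;
     tw_clk_time := fun _ => ttime_snoc_time;
     tw_clk_act := fun _ => ttime_snoc_act |}.

Lemma astep_test_stuck {E : Type} (M : model E) e z a z' d' : ~ astep M e z (PTest a) z' d'.
Proof. intro H; inversion H. Qed.

Lemma esg_act_reach w e z t c :
  clos_refl_trans _ (step (esg_model w) e) (z, PAct t) c ->
  c = (z, PAct t) \/ c = (z ++ [ev (esg_model w) e z t], PTest FTrue).
Proof.
  intro H; apply clos_rt_rt1n in H; destruct H as [|[z1 d1] c Hstep Hrest]; auto.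
  destruct Hstep as [z0 [Hz0 Hact]]; simpl in Hz0, Hact; subst z0.
  inversion Hact; subst; right.
  destruct Hrest as [|c2 c Hstep Hrest]; [reflexivity|].
  destruct Hstep as [z2 [Hz2 Hstuck]]; simpl in Hz2, Hstuck.
  exfalso; exact (astep_test_stuck _ _ _ _ _ _ Hstuck).
Qed.

Lemma esg_fin_ptrace_act w e z t z' :
  fin_ptrace (esg_model w) e z (PAct t) z' -> z' = [ev (esg_model w) e z t].
Proof.
  intros [d' [Hreach Hfinal]]; apply esg_act_reach in Hreach as [H | H];
    injection H as Hz Hd; subst d'; [contradiction|].
  exact (app_inv_head _ _ _ Hz).
Qed.

Lemma tesg_fin_ptrace_act w e z t r :
  (ttime z <= r)%R ->
  fin_ptrace (tesg_model w) e z (PAct t)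
    [ETime r; EAct (ev (tesg_model w) e (z ++ [ETime r]) t)].
Proof.
  intro Hr; exists (PTest FTrue); split; [|split; reflexivity].
  apply rt_step; exists (z ++ [ETime r]); split; [exists r; split; auto|].
  change [ETime r; EAct (ev (tesg_model w) e (z ++ [ETime r]) t)]
    with ([ETime r] ++ [m_act (tesg_model w) (ev (tesg_model w) e (z ++ [ETime r]) t)]).
  rewrite app_assoc; constructor.
Qed.

Definition FOr (a b : form) : form := FNot (FAnd (FNot a) (FNot b)).

Definition act_decides (t : term) (phi : form) : form :=
  FOr (FAfter (PAct t) phi) (FAfter (PAct t) (FNot phi)).

Lemma esg_valid_act_decides t phi : esg_valid (act_decides t phi).
Proof.
  intros w e; simpl; intros [Hnot_phi Hnot_neg].
  set (a := ev (esg_model w) e [] t).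
  destruct (classic (holds (esg_model w) e [a] phi)) as [Hphi | Hphi];
    [apply Hnot_phi | apply Hnot_neg];
    intros z' Hz'; apply esg_fin_ptrace_act in Hz'; subst z'; exact Hphi.
Qed.

Lemma not_tesg_valid_act_decides t ar i args :
  ~ tesg_valid (act_decides t (FPred (PUser ar false i) args)).
Proof.
  intro Hvalid; apply (Hvalid time_world (fun _ _ => 0%nat)); split; intro Hafter.
  - specialize (Hafter _ (tesg_fin_ptrace_act time_world _ [] t 1 Rle_0_1)).
    apply at_time_zero_iff in Hafter; unfold ttime in Hafter; simpl in Hafter; lra.
  - specialize (Hafter _ (tesg_fin_ptrace_act time_world _ [] t 0 (Rle_refl 0))).
    apply Hafter, at_time_zero_iff; reflexivity.
Qed.

Theorem mainTheorem6 :
  exists a : form, sentence a /\ esg_form a /\ esg_valid a /\ ~ tesg_valid a.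
Proof.
  exists (act_decides (TName SAct 0) (FPred (PUser [] false 0) [])).
  split; [|split; [|split]].
  - repeat split; constructor.
  - repeat split; try discriminate; constructor.
  - apply esg_valid_act_decides.
  - apply not_tesg_valid_act_decides.
Qed.
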